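(* Let $1\le m<n$ be integers and let $c_1,\dots,c_m$ be non-negative integers satisfying $c_1+2c_2+\cdots+mc_m\le n-m-1$. Let $\pi\in S_n$ be chosen uniformly at random, and let $c_i(\pi)$ denote the number of cycles of length $i$ in $\pi$. Then \[ \frac{1}{(2m+2)\prod_{i=1}^m c_i!\, i^{c_i}} \le \mathbb{P}\big(c_1(\pi)=c_1,\dots,c_m(\pi)=c_m\big) \le \frac{1}{(m+1)\prod_{i=1}^m c_i!\, i^{c_i}}. \]
   Context: $S_n$ is the symmetric group on $\{1,\dots,n\}$. *)

From mathcomp Require Import all_boot all_order all_algebra all_fingroup.
Set Implicit Arguments. Unset Strict Implicit. Unset Printing Implicit Defensive.

(* Number of cycles of length i of a permutation s of 'I_n
   (cycles = orbits of <[s]>, including fixed points as 1-cycles). *)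
Definition ncycles (n : nat) (s : {perm 'I_n}) (i : nat) : nat :=
  #|[set C in porbits s | #|C| == i]|.

Definition cycle_event (n m : nat) (c : nat -> nat) : {set {perm 'I_n}} :=
  [set s : {perm 'I_n} | [forall i : 'I_m, ncycles s i.+1 == c i.+1]].

Definition unif_prob (n : nat) (A : {set {perm 'I_n}}) : rat :=
  (#|A|%:R / #|{perm 'I_n}|%:R)%R.

From mathcomp Require Import all_boot all_order all_algebra all_fingroup zify ring.
Import Order.TTheory GRing.Theory Num.Theory.
Set Implicit Arguments. Unset Strict Implicit. Unset Printing Implicit Defensive.

(* Writing a permutation of A as (x y) * s with s a permutation of A \ x
   inserts the point x into the cycle of y (as a fixed point if y = x). Tracking
   how this changes the cycles of length at most m shows that the number of
   permutations of N points with c_i cycles of length i, for i <= m, is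
   N! / Z * d(N - sum_i i c_i), where Z = prod_i c_i! i^c_i and d(M) is the
   probability that a permutation of M points has no cycle of length at most m.
   Inserting a point into a permutation without short cycles gives the
   recurrence (M+1) d(M+1) = M d(M) + [m <= M] d(M - m), and an induction on M
   yields 1/(2m+2) < d(M) <= 1/(m+1) for M > m; here M = n - sum_i i c_i > m. *)

(** * Inserting a point into a cycle *)

Section PorbitInsertion.
Variable T : finType.
Implicit Types (s t : {perm T}) (B : {set T}) (x y z w : T).

Lemma porbit_sub s B z : {in B, forall w, s w \in B} -> z \in B ->
  porbit s z \subset B.
Proof.
move=> sB zB; apply/subsetP => w /porbitP [i ->].
elim: i => [|i IH]; first by rewrite expg0 perm1.
by rewrite expgSr permM sB.
Qed.

Lemma mem_porbit_perm s z w : w \in porbit s z -> s w \in porbit s z.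
Proof.
move=> wz; rewrite -(eqP (etrans (eq_porbit_mem s w z) wz)).
by rewrite -{1}[s]expg1 mem_porbit.
Qed.

Lemma eq_porbit_on s t z : {in porbit s z, t =1 s} -> porbit t z = porbit s z.
Proof.
move=> ts.
have sub_ts : porbit t z \subset porbit s z.
  by apply: porbit_sub (porbit_id _ _) => w wz; rewrite ts ?mem_porbit_perm.
apply/eqP; rewrite eqEsubset sub_ts /=.
apply: porbit_sub (porbit_id _ _) => w wz.
by rewrite -ts ?mem_porbit_perm // (subsetP sub_ts).
Qed.

Lemma porbit_fixed s x : s x = x -> porbit s x = [set x].
Proof.
move=> sx; apply/eqP; rewrite eqEsubset sub1set porbit_id andbT.
by apply: porbit_sub; [move=> w; rewrite !inE => /eqP ->; rewrite sx | rewrite inE].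
Qed.

Variables (s : {perm T}) (x y : T).
Hypotheses (sx : s x = x) (xy : x != y).
(* [t] maps [y] to [x] and [x] to [s y]: it inserts [x] after [y] in its cycle. *)
Let t := (tperm x y * s)%g.

Let tE w : t w = s (tperm x y w).
Proof. by rewrite /t permM. Qed.

Lemma fixed_notin_porbit : x \notin porbit s y.
Proof. by rewrite porbit_sym porbit_fixed // inE eq_sym. Qed.

Lemma porbit_insert : porbit t x = x |: porbit s y.
Proof.
have nyP w : w \in porbit s y -> w != x.
  by move=> wy; apply: contraNneq fixed_notin_porbit => <-.
apply/eqP; rewrite eqEsubset; apply/andP; split.
  apply: porbit_sub; last by rewrite setU11.
  move=> w; rewrite !inE tE => /orP[/eqP ->|wy].
    by rewrite tpermL mem_porbit_perm ?porbit_id ?orbT.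
  case: (eqVneq w y) => [->|ney]; first by rewrite tpermR sx eqxx.
  by rewrite tpermD 1?eq_sym ?nyP // mem_porbit_perm ?orbT.
rewrite subUset sub1set porbit_id /=.
have syt : s y \in porbit t x by rewrite -(tpermL x y) -tE mem_porbit_perm ?porbit_id.
suff : porbit s (s y) \subset porbit s y :&: porbit t x.
  by have := porbit_perm s 1 y; rewrite expg1 => ->; rewrite subsetI => /andP[].
apply: porbit_sub; last by rewrite inE syt mem_porbit_perm ?porbit_id.
move=> w; rewrite !inE => /andP[wy wx]; rewrite mem_porbit_perm //=.
case: (eqVneq w y) => [-> //|ney].
by rewrite -(@tpermD _ x y w) 1?eq_sym ?nyP // -tE mem_porbit_perm.
Qed.

Lemma porbit_insert_in z : z \in x |: porbit s y -> porbit t z = x |: porbit s y.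
Proof.
by move=> zP; rewrite -porbit_insert; apply/eqP; rewrite eq_porbit_mem porbit_insert.
Qed.

Lemma porbit_insert_out z : z \notin x |: porbit s y -> porbit t z = porbit s z.
Proof.
rewrite inE negb_or => /andP[zx zy]; apply: eq_porbit_on => w wz.
have wy : w != y by apply: contraNneq zy => <-; rewrite porbit_sym.
have wx : w != x by apply: contraNneq zx => ex; move: wz; rewrite ex porbit_sym porbit_fixed // inE.
by rewrite tE tpermD 1?eq_sym.
Qed.

End PorbitInsertion.

(** * Counting permutations by short cycle type *)

Lemma card_sep_const (T : finType) (A B : {set T}) (P : pred T) b :
  B \subset A -> {in B, P =1 fun=> b} ->
  #|[set z in A | P z]| = b * #|B| + #|[set z in A :\: B | P z]|.
Proof.
move=> sBA PB; rewrite -(cardsID B [set z in A | P z]); congr (_ + _).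
  case: b PB => PB; last first.
    apply/eqP; rewrite mul0n cards_eq0; apply/eqP/setP => z; rewrite !inE.
    by case zB: (z \in B); rewrite ?andbF // PB // andbF.
  rewrite mul1n; apply: eq_card => z; rewrite !inE.
  by case zB: (z \in B); rewrite ?andbF // PB // (subsetP sBA).
by apply: eq_card => z; rewrite !inE andbA.
Qed.

Lemma card_sep_sum (T : finType) (A : {set T}) (P : pred T) :
  #|[set z in A | P z]| = \sum_(z in A) P z.
Proof.
rewrite -sum1_card [LHS]big_mkcond [RHS]big_mkcond /=.
by apply: eq_bigr => z _; rewrite !inE; case: (z \in A); case: (P z).
Qed.

Section CyclePoints.
Variable T : finType.
Implicit Types (s : {perm T}) (A : {set T}) (x y z : T).

Definition cyclepts s A i := #|[set z in A | #|porbit s z| == i]|.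

Lemma cyclepts_set0 s i : cyclepts s set0 i = 0.
Proof. by apply/eqP; rewrite cards_eq0; apply/eqP/setP => z; rewrite !inE. Qed.

Lemma perm_onD1_fixed A x s : perm_on (A :\ x) s -> s x = x.
Proof. by move=> sA; apply: (out_perm sA); rewrite !inE eqxx. Qed.

Lemma cyclepts_fix A x s i : x \in A -> perm_on (A :\ x) s ->
  cyclepts s A i = cyclepts s (A :\ x) i + (i == 1).
Proof.
move=> xA sA; rewrite /cyclepts (@card_sep_const _ A [set x] _ (i == 1)).
- by rewrite cards1 muln1 addnC.
- by rewrite sub1set.
move=> z; rewrite inE => /eqP ->.
by rewrite porbit_fixed ?cards1 1?eq_sym ?(perm_onD1_fixed sA).
Qed.

Lemma cyclepts_insert A x y s i : x \in A -> perm_on (A :\ x) s -> y \in A :\ x ->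
  let l := #|porbit s y| in
  cyclepts (tperm x y * s)%g A i + (l == i) * l = cyclepts s (A :\ x) i + (l.+1 == i) * l.+1.
Proof.
move=> xA sA yA l; have sx := perm_onD1_fixed sA.
have xy : x != y by move: yA; rewrite !inE eq_sym => /andP[].
have yP_A : porbit s y \subset A :\ x.
  by apply: porbit_sub yA => w wA; rewrite (perm_closed _ sA).
have xyP := fixed_notin_porbit sx xy.
rewrite /cyclepts (@card_sep_const _ A (x |: porbit s y) _ (l.+1 == i)); last first.
- by move=> z zP; rewrite porbit_insert_in // cardsU1 xyP.
- by rewrite subUset sub1set xA (subset_trans yP_A) // subD1set.
rewrite (@card_sep_const _ (A :\ x) (porbit s y) _ (l == i)) //; last first.
  by move=> z zy; rewrite (eqP (etrans (eq_porbit_mem s z y) zy)).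
have -> : [set z in A :\: (x |: porbit s y) | #|porbit (tperm x y * s)%g z| == i]
        = [set z in A :\ x :\: porbit s y | #|porbit s z| == i].
  apply/setP => z; rewrite !inE.
  case: (eqVneq z x) => [-> /=|zx]; first by rewrite andbF.
  case zy: (z \in porbit s y) => //=.
  by rewrite porbit_insert_out // !inE negb_or zx zy.
rewrite cardsU1 xyP /= -/l; lia.
Qed.

Lemma perm_onD1 A x s : perm_on A s -> s x = x -> perm_on (A :\ x) s.
Proof.
move=> /subsetP sA sx; apply/subsetP => z; rewrite inE => sz.
rewrite !inE sA ?inE // andbT; by apply: contraNneq sz => ->; rewrite sx.
Qed.

Lemma perm_on_tperm A x y : x \in A -> y \in A -> perm_on A (tperm x y).
Proof.
by move=> xA yA; apply: subset_trans (tperm_on x y) _; rewrite subUset !sub1set xA yA.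
Qed.

Lemma big_perm_on_insert A x (F : {perm T} -> nat) : x \in A ->
  \sum_(s | perm_on A s) F s =
  \sum_(y in A) \sum_(s | perm_on (A :\ x) s) F (tperm x y * s)%g.
Proof.
move=> xA.
pose ins (p : T * {perm T}) := (tperm x p.1 * p.2)%g.
pose del (s : {perm T}) := (s^-1%g x, (tperm x (s^-1%g x) * s)%g).
rewrite (reindex_onto ins del); last by move=> s _; rewrite /ins tpermKg.
rewrite pair_big /=; apply: eq_big => [[y s]|//] /=.
rewrite /ins /del /=; apply/idP/idP.
  case/andP=> tsA /eqP [e1 e2].
  have sx : s x = x.
    move: e1; rewrite invMg permM tpermV.
    case: (eqVneq (s^-1%g x) x) => [sVx _|sVx]; first by rewrite -{1}sVx permKV.
    case: tpermP => [e|e ey|_ ny ey]; first by rewrite e eqxx in sVx.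
      by rewrite e ey eqxx in sVx.
    by rewrite ey in ny.
  have yA : y \in A.
    apply: contraT => yA; have := out_perm tsA yA.
    by rewrite permM tpermR sx => yx; rewrite -yx xA in yA.
  rewrite yA /=; apply: perm_onD1 sx.
  by rewrite -(tpermKg x y s); apply: perm_onM => //; apply: perm_on_tperm.
case/andP=> yA sA; have sx := perm_onD1_fixed sA.
have sVx : s^-1%g x = x by rewrite -{1}sx permK.
rewrite perm_onM ?perm_on_tperm //=; last by apply: subset_trans sA _; rewrite subD1set.
by rewrite invMg permM sVx tpermV tpermL tpermKg.
Qed.

End CyclePoints.

Lemma sum_eqn_indicator k v (H : nat -> nat) :
  \sum_(1 <= l < k.+1) (v == l) * H l = ((0 < v) && (v <= k)) * H v.
Proof.
elim: k => [|k IH]; first by rewrite big_geq //; case: v => [|[]].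
rewrite big_nat_recr //= IH; case: (eqVneq v k.+1) => [->|ne].
  by rewrite ltnn andbF /= leqnn mul0n add0n mul1n.
rewrite mul0n addn0; congr (_ * _); congr nat_of_bool.
by rewrite [(v <= k.+1)%N]leq_eqVlt (negbTE ne) ltnS.
Qed.

Section ShortCycleType.
Variables (T : finType) (m : nat).
Hypothesis m_gt0 : 0 < m.
Implicit Types (s : {perm T}) (A : {set T}) (x y : T) (c : nat -> nat).

Definition short_type s A c := [forall i : 'I_m, cyclepts s A i.+1 == i.+1 * c i.+1].

Definition ntype A c := \sum_(s | perm_on A s) short_type s A c.

Definition weight c := \sum_(1 <= i < m.+1) i * c i.

Definition unfix_type c i := if i == 1 then (c i).-1 else c i.

Definition shorten_type c l i :=
  if i == l then (c i).+1 else if i == l.+1 then (c i).-1 else c i.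

(* [short_type] of the permutation obtained from [s] by inserting a new point
   into an [l]-cycle, expressed in terms of [s]. *)
Definition grow_type s A c l := [forall i : 'I_m,
  cyclepts s A i.+1 + (l.+1 == i.+1) * l.+1 == i.+1 * c i.+1 + (l == i.+1) * l].

Lemma short_type_cyclepts s A c l : short_type s A c -> 0 < l <= m ->
  cyclepts s A l = l * c l.
Proof.
move=> /forallP sc /andP[l_gt0 lm]; have lm' : l.-1 < m by lia.
by have := sc (Ordinal lm'); rewrite /= prednK // => /eqP.
Qed.

Lemma short_type_fix A x s c : x \in A -> perm_on (A :\ x) s ->
  short_type s A c = (0 < c 1) && short_type s (A :\ x) (unfix_type c).
Proof.
move=> xA sA; rewrite /short_type.
have fixE i : cyclepts s A i.+1 = cyclepts s (A :\ x) i.+1 + (i == 0).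
  by rewrite (cyclepts_fix _ xA sA).
have stepE i : (cyclepts s A i.+1 == i.+1 * c i.+1) =
    ((i == 0) ==> (0 < c 1)) && (cyclepts s (A :\ x) i.+1 == i.+1 * unfix_type c i.+1).
  rewrite fixE /unfix_type; case: i => [|i] /=; last by rewrite addn0.
  rewrite !mul1n addn1; case: (c 1) => [|k] //=.
apply/forallP/andP => [sc|[c1 /forallP sc] i]; last by rewrite stepE sc andbT; apply/implyP.
split; first by have := sc (Ordinal m_gt0); rewrite stepE => /andP[].
by apply/forallP => i; have := sc i; rewrite stepE => /andP[].
Qed.

Lemma short_type_insert A x y s c : x \in A -> perm_on (A :\ x) s -> y \in A :\ x ->
  short_type (tperm x y * s)%g A c = grow_type s (A :\ x) c #|porbit s y|.
Proof.
move=> xA sA yA; apply: eq_forallb => i.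
have := cyclepts_insert i.+1 xA sA yA => /= e.
by apply/idP/idP => /eqP e'; apply/eqP; lia.
Qed.

Lemma grow_type_long s A c l : m < l -> grow_type s A c l = short_type s A c.
Proof.
move=> ml; apply: eq_forallb => i; have := ltn_ord i => im.
have -> : (l.+1 == i.+1) = false by apply/eqP; lia.
have -> : (l == i.+1) = false by apply/eqP; lia.
by rewrite !mul0n !addn0.
Qed.

Lemma grow_type_eqn p l j cj : 0 < j ->
  (p + (l.+1 == j) * l.+1 == j * cj + (l == j) * l) =
  ((j == l.+1) ==> (0 < cj)) &&
  (p == j * (if j == l then cj.+1 else if j == l.+1 then cj.-1 else cj)).
Proof.
move=> j0; case: (eqVneq j l) => [e1|n1]; case: (eqVneq j l.+1) => [e2|n2];
  case: (eqVneq l.+1 j) => [e3|n3]; case: (eqVneq l j) => [e4|n4] /=;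
  try (exfalso; lia).
- by rewrite mul0n mul1n addn0; apply/eqP/eqP; lia.
- rewrite mul1n mul0n addn0; apply/idP/idP.
    by move/eqP => e; apply/andP; split; [|apply/eqP]; nia.
  by case/andP => cj0 /eqP e; apply/eqP; nia.
- by rewrite !mul0n !addn0.
Qed.

Lemma grow_type_short s A c l : 0 < l <= m ->
  grow_type s A c l = ((l < m) ==> (0 < c l.+1)) && short_type s A (shorten_type c l).
Proof.
move=> /andP[l0 lm]; rewrite /grow_type /short_type.
rewrite (eq_forallb (fun i : 'I_m => grow_type_eqn (cyclepts s A i.+1) l (c i.+1) (ltn0Sn i))).
apply/forallP/andP => [gc|[cl /forallP sc] i].
  split; last by apply/forallP => i; case/andP: (gc i).
  by apply/implyP => lm'; have := gc (Ordinal lm'); case/andP; rewrite /= eqxx.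
rewrite sc andbT; apply/implyP => /eqP [il]; rewrite il.
by apply: (implyP cl); rewrite -il.
Qed.

Lemma sum_by_orbit_size A s (H : nat -> nat) :
  \sum_(y in A) H #|porbit s y| =
  \sum_(1 <= l < m.+1) cyclepts s A l * H l
  + \sum_(y in A) (m < #|porbit s y|) * H #|porbit s y|.
Proof.
have split_size y : H #|porbit s y| =
    \sum_(1 <= l < m.+1) (#|porbit s y| == l) * H l + (m < #|porbit s y|) * H #|porbit s y|.
  rewrite sum_eqn_indicator; have := card_porbit_neq0 s y.
  case: #|porbit s y| => [|v] // _ /=.
  by case: (leqP v.+1 m) => /= _; rewrite ?mul1n ?mul0n ?add0n ?addn0.
rewrite (eq_bigr _ (fun y _ => split_size y)) big_split /=; congr (_ + _).
rewrite exchange_big /=; apply: eq_bigr => l _.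
by rewrite /cyclepts card_sep_sum big_distrl.
Qed.

Lemma card_long_orbits A s :
  #|[set y in A | m < #|porbit s y|]| = #|A| - \sum_(1 <= l < m.+1) cyclepts s A l.
Proof.
have := sum_by_orbit_size A s (fun=> 1); rewrite sum1_card.
under [in X in _ = X + _]eq_bigr do rewrite muln1.
under [in X in _ = _ + X]eq_bigr do rewrite muln1.
by rewrite -card_sep_sum => ->; rewrite addKn.
Qed.

Lemma sum_short_type_insert A x s c : x \in A -> perm_on (A :\ x) s ->
  \sum_(y in A) short_type (tperm x y * s)%g A c =
    (0 < c 1) * short_type s (A :\ x) (unfix_type c)
  + \sum_(1 <= l < m.+1)
      ((l < m) ==> (0 < c l.+1)) * (cyclepts s (A :\ x) l * short_type s (A :\ x) (shorten_type c l))
  + (#|A :\ x| - \sum_(1 <= l < m.+1) cyclepts s (A :\ x) l) * short_type s (A :\ x) c.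
Proof.
move=> xA sA; set A' := A :\ x.
rewrite (bigD1 x) //= tperm1 mul1g (short_type_fix _ xA sA) -addnA.
congr (_ + _); first by case: (0 < c 1); rewrite ?mul1n ?mul0n.
rewrite (eq_bigl (mem A')); last by move=> y; rewrite !inE andbC.
rewrite (eq_bigr (fun y => grow_type s A' c #|porbit s y| : nat)); last first.
  by move=> y yA; rewrite (short_type_insert _ xA sA yA).
rewrite (sum_by_orbit_size _ _ (fun l => grow_type s A' c l : nat)); congr (_ + _).
  apply: eq_big_nat => l lm; rewrite grow_type_short //.
  by case: (_ ==> _); case: short_type; rewrite ?muln0 ?muln1 ?mul0n ?mul1n.
rewrite -card_long_orbits card_sep_sum big_distrl /=; apply: eq_bigr => y _.
by case: (ltnP m #|porbit s y|) => //= ml; rewrite grow_type_long.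
Qed.

Lemma ntype_rec A x c : x \in A ->
  ntype A c = (0 < c 1) * ntype (A :\ x) (unfix_type c)
   + \sum_(1 <= l < m.+1) ((l < m) ==> (0 < c l.+1)) * (l * (c l).+1) * ntype (A :\ x) (shorten_type c l)
   + (#|A :\ x| - weight c) * ntype (A :\ x) c.
Proof.
move=> xA; rewrite /ntype (big_perm_on_insert _ xA) exchange_big /=.
rewrite (eq_bigr _ (fun s sA => sum_short_type_insert c xA sA)) !big_split /=.
congr (_ + _ + _); first by rewrite big_distrr.
  rewrite exchange_big /=; apply: eq_big_nat => l lm.
  rewrite -mulnA -big_distrr /=; congr (_ * _); rewrite big_distrr /=.
  apply: eq_bigr => s _; case sc: short_type; rewrite ?muln0 //.
  by rewrite (short_type_cyclepts sc) // /shorten_type eqxx.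
rewrite big_distrr /=; apply: eq_bigr => s _; case sc: short_type; rewrite ?muln0 //.
by congr ((_ - _) * _); apply: eq_big_nat => l lm; apply: short_type_cyclepts.
Qed.

End ShortCycleType.

Local Open Scope ring_scope.

(** * Permutations without short cycles *)

Section NoShortCycleProbability.
Variable m : nat.

Fixpoint pnoshort_fuel (f M : nat) : rat :=
  if f is f'.+1 then
    if M is M'.+1 then
      (M'%:R * pnoshort_fuel f' M' + (if (m <= M')%N then pnoshort_fuel f' (M' - m) else 0))
        / M%:R
    else 1
  else 1.

Lemma pnoshort_fuelSS f M : pnoshort_fuel f.+1 M.+1 =
  (M%:R * pnoshort_fuel f M + (if (m <= M)%N then pnoshort_fuel f (M - m) else 0)) / M.+1%:R.
Proof. by []. Qed.

Lemma pnoshort_fuel_ge f M : (M <= f)%N -> pnoshort_fuel f M = pnoshort_fuel M M.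
Proof.
have step g N : (N <= g)%N -> pnoshort_fuel g.+1 N = pnoshort_fuel g N.
  elim: g N => [|g IH] [|N] gN; [by [] | lia | by [] |].
  by rewrite pnoshort_fuelSS [RHS]pnoshort_fuelSS !IH //; lia.
elim: f => [|f IH] Mf; first by case: M Mf.
case: (eqVneq M f.+1) => [-> //|Mf1].
by rewrite step ?IH //; lia.
Qed.

(* [pnoshort M] is the probability that a permutation of [M] points has no
   cycle of length at most [m]; it is defined through its recurrence
   [(M+1) d(M+1) = M d(M) + [m <= M] d(M-m)], the fuel being any bound on [M]. *)
Definition pnoshort M := pnoshort_fuel M M.

Lemma pnoshort0 : pnoshort 0 = 1. Proof. by []. Qed.

Lemma pnoshort_rec M : pnoshort M.+1 * M.+1%:R =
  M%:R * pnoshort M + (if (m <= M)%N then pnoshort (M - m) else 0).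
Proof.
rewrite /pnoshort pnoshort_fuelSS divfK ?pnatr_eq0 //.
by case: ifP => // mM; rewrite (@pnoshort_fuel_ge M (M - m)) //; lia.
Qed.

(* [d(N - K)], where the truncated subtraction is guarded: it is [0], not [d 0], when [N < K]. *)
Definition pnoshort_sub N K := if (K <= N)%N then pnoshort (N - K) else 0.

Lemma pnoshort_subSS N K : pnoshort_sub N.+1 K.+1 = pnoshort_sub N K.
Proof. by rewrite /pnoshort_sub ltnS subSS. Qed.

Lemma pnoshort_sub_rec N K : N.+1%:R * pnoshort_sub N.+1 K =
  K%:R * pnoshort_sub N.+1 K + pnoshort_sub N (K + m) + (N - K)%:R * pnoshort_sub N K.
Proof.
rewrite /pnoshort_sub; case: (leqP K N) => KN.
  have -> : (K <= N.+1)%N by lia.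
  have -> : (K + m <= N)%N = (m <= N - K)%N by lia.
  have -> : (N.+1 - K = (N - K).+1)%N by lia.
  have -> : (N - (K + m) = N - K - m)%N by lia.
  have {1}-> : N.+1 = (K + (N - K).+1)%N by lia.
  rewrite natrD mulrDl [_.+1%:R * _]mulrC pnoshort_rec.
  by case: ifP => _; ring.
case: (eqVneq K N.+1) => [->|KN1].
  rewrite leqnn subnn (_ : (N.+1 + m <= N)%N = false); last by lia.
  by rewrite (_ : (N - N.+1)%N = 0%N) ?pnoshort0 ?mulr1 ?mul0r ?addr0 //; lia.
rewrite (_ : (K <= N.+1)%N = false); last by lia.
by rewrite (_ : (K + m <= N)%N = false) ?mulr0 ?addr0 //; lia.
Qed.

End NoShortCycleProbability.

Section ClosedFormula.
Variable m : nat.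
Hypothesis m_gt0 : (0 < m)%N.
Local Notation pnoshort_sub := (pnoshort_sub m).
Implicit Types (b c : nat -> nat).

Definition zcoef c := (\prod_(1 <= i < m.+1) ((c i)`! * i ^ c i))%N.

Lemma zcoef_gt0 c : (0 < zcoef c)%N.
Proof.
rewrite /zcoef big_seq; apply: prodn_cond_gt0 => i; rewrite mem_index_iota => /andP[i0 _].
by rewrite muln_gt0 fact_gt0 expn_gt0 i0.
Qed.

Lemma zcoef_neq0 c : (zcoef c)%:R != 0 :> rat.
Proof. by rewrite pnatr_eq0 -lt0n zcoef_gt0. Qed.

Lemma weight_zcoef_succ j b c : (0 < j <= m)%N -> c j = (b j).+1 ->
    (forall i, (0 < i <= m)%N -> i != j -> c i = b i) ->
  weight m c = (weight m b + j)%N /\ zcoef c = (zcoef b * ((b j).+1 * j))%N.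
Proof.
move=> jm cj cb.
have jI : j \in index_iota 1 m.+1 by rewrite mem_index_iota; lia.
have cbI i : i \in index_iota 1 m.+1 -> i != j -> c i = b i.
  by rewrite mem_index_iota => iI; apply: cb; lia.
rewrite /weight /zcoef !(bigD1_seq j) ?iota_uniq //=.
have -> : (\sum_(i <- index_iota 1 m.+1 | i != j) i * c i =
           \sum_(i <- index_iota 1 m.+1 | i != j) i * b i)%N.
  by rewrite big_seq_cond [RHS]big_seq_cond; apply: eq_bigr => i /andP[iI ij]; rewrite cbI.
have -> : (\prod_(i <- index_iota 1 m.+1 | i != j) ((c i)`! * i ^ c i) =
           \prod_(i <- index_iota 1 m.+1 | i != j) ((b i)`! * i ^ b i))%N.
  by rewrite big_seq_cond [RHS]big_seq_cond; apply: eq_bigr => i /andP[iI ij]; rewrite cbI.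
rewrite cj; split; first lia.
by rewrite factS expnS; ring.
Qed.

Definition ntype_closed N c := N`!%:R / (zcoef c)%:R * pnoshort_sub N (weight m c).

Lemma ntype_closed_unfix N c : (0 < c 1)%:R * ntype_closed N (unfix_type c) =
  (c 1)%:R * (N`!%:R / (zcoef c)%:R) * pnoshort_sub N.+1 (weight m c).
Proof.
case c1: (c 1) => [|a]; first by rewrite !mul0r.
have [wc zc] := @weight_zcoef_succ 1 (unfix_type c) c (ltac:(lia))
  (ltac:(by rewrite /unfix_type /= c1)) (fun i _ i1 => ltac:(by rewrite /unfix_type (negbTE i1))).
rewrite /ntype_closed wc zc addn1 pnoshort_subSS /unfix_type /= c1 /= natrM mul1r.
have := zcoef_neq0 (unfix_type c); rewrite /unfix_type => z0.
by field; rewrite z0 andbT addrC natr1 pnatr_eq0.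
Qed.

Lemma ntype_closed_shorten N c l : (0 < l < m)%N ->
  ((((l < m) ==> (0 < c l.+1)) * (l * (c l).+1))%N)%:R * ntype_closed N (shorten_type c l) =
  (l.+1 * c l.+1)%:R * (N`!%:R / (zcoef c)%:R) * pnoshort_sub N.+1 (weight m c).
Proof.
move=> /andP[l0 lm]; rewrite lm /=.
case cl1: (c l.+1) => [|a]; first by rewrite muln0 !mul0r.
pose b i := if i == l.+1 then (c i).-1 else c i.
have [wc zc] := @weight_zcoef_succ l.+1 b c (ltac:(lia)) (ltac:(by rewrite /b eqxx cl1))
  (fun i _ il => ltac:(by rewrite /b (negbTE il))).
have bl : b l = c l by rewrite /b (_ : (l == l.+1) = false) //; apply/eqP; lia.
have [ws zs] := @weight_zcoef_succ l b (shorten_type c l) (ltac:(lia))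
  (ltac:(by rewrite /shorten_type eqxx bl)) (fun i _ il => ltac:(by rewrite /shorten_type /b (negbTE il))).
have bl1 : b l.+1 = a by rewrite /b eqxx cl1.
rewrite /ntype_closed wc ws zc zs addnS pnoshort_subSS bl bl1 !natrM mul1r.
have := zcoef_neq0 b => z0.
by field; rewrite z0 /= ![1 + _]addrC !natr1 !pnatr_eq0 andbT; lia.
Qed.

Lemma ntype_closed_shorten_max N c :
  ((((m < m) ==> (0 < c m.+1)) * (m * (c m).+1))%N)%:R * ntype_closed N (shorten_type c m) =
  (N`!%:R / (zcoef c)%:R) * pnoshort_sub N (weight m c + m).
Proof.
rewrite ltnn /=.
have [ws zs] := @weight_zcoef_succ m c (shorten_type c m) (ltac:(lia)) (ltac:(by rewrite /shorten_type eqxx))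
  (fun i im ineq => ltac:(by rewrite /shorten_type (negbTE ineq) (_ : (i == m.+1) = false) //; apply/eqP; lia)).
rewrite /ntype_closed ws zs !natrM mul1r.
have := zcoef_neq0 c => z0.
by field; rewrite z0 /= ![1 + _]addrC !natr1 !pnatr_eq0 andbT; lia.
Qed.

Lemma ntype_closed_rec N c : ntype_closed N.+1 c =
    (0 < c 1)%:R * ntype_closed N (unfix_type c)
  + \sum_(1 <= l < m.+1)
      ((((l < m) ==> (0 < c l.+1)) * (l * (c l).+1))%N)%:R * ntype_closed N (shorten_type c l)
  + (N - weight m c)%:R * ntype_closed N c.
Proof.
rewrite big_nat_recr //= ntype_closed_shorten_max ntype_closed_unfix.
rewrite (eq_big_nat _ _ (fun l lm => ntype_closed_shorten N c lm)).
rewrite -!big_distrl /= -natr_sum.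
have wE : (c 1 + \sum_(1 <= l < m) l.+1 * c l.+1)%N = weight m c.
  by rewrite /weight big_nat_recl // mul1n.
have := pnoshort_sub_rec m N (weight m c); rewrite -{2}wE natrD => rec.
rewrite /ntype_closed factS natrM.
set Q := N`!%:R / (zcoef c)%:R; set D := pnoshort_sub N.+1 (weight m c).
have -> : N.+1%:R * N`!%:R / (zcoef c)%:R * D = Q * (N.+1%:R * D) by rewrite /Q; ring.
by rewrite /D rec /Q; ring.
Qed.

End ClosedFormula.

Section CountShortType.
Variables (T : finType) (m : nat).
Hypothesis m_gt0 : (0 < m)%N.

Lemma weight_eq0 c : (weight m c == 0)%N = [forall i : 'I_m, c i.+1 == 0%N].
Proof.
rewrite /weight big_add1 /= big_mkord sum_nat_eq0.
by apply: eq_forallb => i; rewrite muln_eq0.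
Qed.

Lemma zcoef_weight0 c : weight m c = 0%N -> zcoef m c = 1%N.
Proof.
move/eqP; rewrite weight_eq0 => /forallP c0.
rewrite /zcoef big_add1 /= big_mkord big1 // => i _.
by rewrite (eqP (c0 i)).
Qed.

Lemma ntype_set0 c : (ntype m (set0 : {set T}) c)%:R = ntype_closed m 0 c.
Proof.
rewrite /ntype (big_pred1 1%g); last first.
  by move=> s; apply/idP/eqP => [sA|->]; [apply: perm_on_id sA _; rewrite cards0 | exact: perm_on1].
have -> : short_type m (1%g : {perm T}) set0 c = (weight m c == 0)%N.
  by rewrite weight_eq0; apply: eq_forallb => i; rewrite cyclepts_set0 eq_sym muln_eq0.
rewrite /ntype_closed /pnoshort_sub fact0 leqn0.
case: (eqVneq (weight m c) 0%N) => [w0|w0]; last by rewrite mulr0.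
by rewrite zcoef_weight0 // w0 pnoshort0 divr1 mulr1.
Qed.

Lemma ntype_closedE (A : {set T}) c : (ntype m A c)%:R = ntype_closed m #|A| c.
Proof.
move Adef: #|A| => N; elim: N A c Adef => [|N IH] A c Acard.
  by move/cards0_eq: Acard => ->; apply: ntype_set0.
have [x xA] : exists x, x \in A by apply/set0Pn; rewrite -card_gt0 Acard.
have A'card : #|A :\ x| = N by move: Acard; rewrite (cardsD1 x) xA add1n => -[].
rewrite (ntype_rec m_gt0 c xA) !natrD !natrM natr_sum !IH // ntype_closed_rec // A'card.
by congr (_ + _ + _); apply: eq_bigr => l _; rewrite natrM IH.
Qed.

End CountShortType.

(** * Bounds on the probability of no short cycle *)

Section NoShortCycleBounds.
Variable m : nat.
Hypothesis m_gt0 : (0 < m)%N.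
Local Notation d := (pnoshort m).

Lemma pnoshort_small j : (0 < j <= m)%N -> d j = 0.
Proof.
elim: j => [|j IH] // jm.
have := pnoshort_rec m j; rewrite (_ : (m <= j)%N = false) ?addr0; last by apply/negbTE; lia.
have -> : j%:R * d j = 0.
  case: j IH jm => [|j] IH jm; first by rewrite mul0r.
  by rewrite IH ?mulr0 //; lia.
by move/eqP; rewrite mulf_eq0 pnatr_eq0 orbF => /eqP.
Qed.

Lemma pnoshort_mid M : (m < M <= 2 * m + 1)%N -> d M * M%:R = 1.
Proof.
elim: M => [|M IH] Mm; first by exfalso; lia.
rewrite pnoshort_rec (_ : (m <= M)%N = true); last by apply/idP; lia.
case: (eqVneq M m) => [->|Mm'].
  by rewrite pnoshort_small ?mulr0 ?add0r ?subnn ?pnoshort0 //; apply/andP; split.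
rewrite (@pnoshort_small (M - m)); last by lia.
by rewrite addr0 mulrC IH //; lia.
Qed.

Lemma pnoshort_ub M : d M * M%:R * m.+1%:R <= M%:R.
Proof.
elim/ltn_ind: M => [[|M]] IH; first by rewrite !mulr0 mul0r.
rewrite pnoshort_rec; have IHM := IH M (ltnSn M).
case: ifP => mM; last first.
  by rewrite addr0 [M%:R * _]mulrC; apply: le_trans IHM _; rewrite ler_nat.
case: (eqVneq M m) => [->|Mm].
  rewrite subnn pnoshort0 pnoshort_small; last by apply/andP.
  by rewrite mulr0 add0r mul1r.
have j0 : 0 < (M - m)%:R :> rat by rewrite ltr0n; lia.
have dj : d (M - m) * m.+1%:R <= 1.
  have IHj := IH (M - m)%N (ltac:(lia)).
  by rewrite -(ler_pM2r j0) mul1r mulrAC.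
by rewrite mulrDl [M%:R * _]mulrC -[M.+1%:R]natr1; apply: lerD.
Qed.

Lemma pnoshort_lb M : (m < M)%N -> M.+1%:R <= d M * M%:R * (2 * m + 2)%:R.
Proof.
elim/ltn_ind: M => M IH mM.
case: (leqP M (2 * m + 1)) => M2m.
  rewrite pnoshort_mid; last by apply/andP.
  by rewrite mul1r ler_nat; lia.
case: M IH mM M2m => [|M] IH mM M2m; first lia.
rewrite pnoshort_rec (_ : (m <= M)%N = true); last by apply/idP; lia.
have IHM := IH M (ltnSn M) (ltac:(lia)).
have j0 : 0 < (M - m)%:R :> rat by rewrite ltr0n; lia.
have dj : 1 <= d (M - m) * (2 * m + 2)%:R.
  have IHj := IH (M - m)%N (ltac:(lia)) (ltac:(lia)).
  by rewrite -(ler_pM2r j0) mul1r mulrAC; apply: le_trans IHj; rewrite ler_nat; lia.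
by rewrite mulrDl [M%:R * _]mulrC -[M.+2%:R]natr1; apply: lerD.
Qed.

Lemma pnoshort_ge_inv M : (m < M)%N -> (2 * m + 2)%:R^-1 <= d M.
Proof.
move=> mM; have M0 : 0 < M%:R :> rat by rewrite ltr0n; lia.
rewrite -[_^-1]mul1r ler_pdivrMr ?ltr0n ?addn2 // -(ler_pM2r M0) mul1r mulrAC -addn2.
by apply: le_trans (pnoshort_lb mM); rewrite ler_nat.
Qed.

Lemma pnoshort_le_inv M : (0 < M)%N -> d M <= (m + 1)%:R^-1.
Proof.
move=> M0; have M0' : 0 < M%:R :> rat by rewrite ltr0n.
rewrite -[_^-1]mul1r ler_pdivlMr ?ltr0n ?addn1 // -(ler_pM2r M0') mul1r mulrAC.
exact: pnoshort_ub.
Qed.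

End NoShortCycleBounds.

Lemma ncycles_cyclepts n (s : {perm 'I_n}) i : (ncycles s i * i)%N = cyclepts s setT i.
Proof.
rewrite /ncycles /cyclepts.
set P := [set C in porbits s | #|C| == i].
have sameP z w : z \in porbit s w -> porbit s z = porbit s w.
  by move=> zw; apply/eqP; rewrite eq_porbit_mem.
have Ppart : partition P [set z in [set: 'I_n] | #|porbit s z| == i].
  apply/and3P; split.
  - apply/eqP/setP => z; rewrite !inE; apply/bigcupP/idP.
      by case=> C; rewrite !inE => /andP[/imsetP[w _ ->] Ci] /sameP ->.
    move=> zi; exists (porbit s z); last exact: porbit_id.
    by rewrite !inE imset_f.
  - apply/trivIsetP => A B; rewrite !inE => /andP[/imsetP[a _ ->] _] /andP[/imsetP[b _ ->] _].
    move=> ab; apply/pred0P => z /=; apply/negP => /andP[za zb]; move/negP: ab; apply.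
    by rewrite -(sameP _ _ za) -(sameP _ _ zb).
  - apply/negP; rewrite !inE => /andP[/imsetP[w _ w0] _].
    by have := porbit_id s w; rewrite -w0 inE.
rewrite (card_partition Ppart) (eq_bigr (fun=> i)) ?sum_nat_const //.
by move=> C; rewrite !inE => /andP[_ /eqP].
Qed.

Lemma card_cycle_event n m c : #|cycle_event n m c| = ntype m [set: 'I_n] c.
Proof.
rewrite /ntype /cycle_event -sum1_card [LHS]big_mkcond /=.
apply: eq_big => s; first by apply/esym/subsetP => x _; rewrite inE.
move=> _; rewrite !inE; congr (nat_of_bool _); apply: eq_forallb => i.
by rewrite -ncycles_cyclepts mulnC eqn_mul2l.
Qed.

Lemma unif_prob_cycle_event n m c : (0 < m)%N -> (weight m c <= n)%N ->
  unif_prob (cycle_event n m c) = pnoshort m (n - weight m c) / (zcoef m c)%:R.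
Proof.
move=> m_gt0 wn; rewrite /unif_prob card_cycle_event card_Sn.
rewrite ntype_closedE // cardsT card_ord /ntype_closed /pnoshort_sub wn.
have fact_neq0 : n`!%:R != 0 :> rat by rewrite pnatr_eq0 -lt0n fact_gt0.
by field; rewrite fact_neq0 zcoef_neq0.
Qed.

Unset Implicit Arguments.

Theorem proposition2p1 (n m : nat) (c : nat -> nat)
  (hm1 : (1 <= m)%N) (hmn : (m < n)%N)
  (hc : (\sum_(1 <= i < m.+1) i * c i <= n - m - 1)%N) :
  let Z : rat := (\prod_(1 <= i < m.+1) ((c i)`! * i ^ (c i)))%N%:R in
  1 / ((2 * m + 2)%N%:R * Z) <= unif_prob (cycle_event n m c)
  /\ unif_prob (cycle_event n m c) <= 1 / ((m + 1)%N%:R * Z).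
Proof.
move=> Z; have hw : (weight m c <= n - m - 1)%N := hc.
have Zinv_gt0 : 0 < Z^-1 by rewrite invr_gt0 ltr0n zcoef_gt0.
rewrite unif_prob_cycle_event //; last by lia.
rewrite !mul1r !invfM; split; rewrite ler_pM2r //.
  by apply: pnoshort_ge_inv => //; lia.
by apply: pnoshort_le_inv; lia.
Qed.
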